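(* Let ${\mathbf{X}}^{({\mathbf{A}})}_1,\dots,{\mathbf{X}}^{({\mathbf{A}})}_s,{\mathbf{X}}^{({\mathbf{B}})}_1,\dots,{\mathbf{X}}^{({\mathbf{B}})}_t\in\mathbb{R}^{m\times n}$, ${\mathbf{A}}_i\in\mathbb{R}^{k_i\times m}$ ($i=1,\dots,s$), ${\mathbf{B}}_j\in\mathbb{R}^{n\times \ell_j}$ ($j=1,\dots,t$), and consider $$F({\mathbf{U}},{\mathbf{V}})=\frac12\sum_{i=1}^s\|{\mathbf{A}}_i({\mathbf{X}}^{({\mathbf{A}})}_i-{\mathbf{U}}{\mathbf{V}}^T)\|_F^2+\frac12\sum_{j=1}^t\|({\mathbf{X}}^{({\mathbf{B}})}_j-{\mathbf{U}}{\mathbf{V}}^T){\mathbf{B}}_j\|_F^2$$ for ${\mathbf{U}}\in\mathbb{R}^{m\times r},{\mathbf{V}}\in\mathbb{R}^{n\times r}$. Suppose the six matrices ${\mathbf{U}}$, ${\mathbf{V}}$, $\sum_i{\mathbf{A}}_i^T{\mathbf{A}}_i$, $\sum_j{\mathbf{B}}_j{\mathbf{B}}_j^T$, $\sum_i{\mathbf{A}}_i^T{\mathbf{A}}_i{\mathbf{X}}^{({\mathbf{A}})}_i$, $\sum_j{\mathbf{X}}^{({\mathbf{B}})}_j{\mathbf{B}}_j{\mathbf{B}}_j^T$ are entrywise nonnegative, and that the denominators below are entrywise positive. Define $${\mathbf{U}}'={\mathbf{U}}\circ\frac{\sum_i{\mathbf{A}}_i^T{\mathbf{A}}_i{\mathbf{X}}^{({\mathbf{A}})}_i{\mathbf{V}}+\sum_j{\mathbf{X}}^{({\mathbf{B}})}_j{\mathbf{B}}_j{\mathbf{B}}_j^T{\mathbf{V}}}{\sum_i{\mathbf{A}}_i^T{\mathbf{A}}_i{\mathbf{U}}{\mathbf{V}}^T{\mathbf{V}}+\sum_j{\mathbf{U}}{\mathbf{V}}^T{\mathbf{B}}_j{\mathbf{B}}_j^T{\mathbf{V}}},\qquad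 {\mathbf{V}}'={\mathbf{V}}\circ\frac{\sum_i({\mathbf{X}}^{({\mathbf{A}})}_i)^T{\mathbf{A}}_i^T{\mathbf{A}}_i{\mathbf{U}}+\sum_j{\mathbf{B}}_j{\mathbf{B}}_j^T({\mathbf{X}}^{({\mathbf{B}})}_j)^T{\mathbf{U}}}{\sum_i{\mathbf{V}}{\mathbf{U}}^T{\mathbf{A}}_i^T{\mathbf{A}}_i{\mathbf{U}}+\sum_j{\mathbf{B}}_j{\mathbf{B}}_j^T{\mathbf{V}}{\mathbf{U}}^T{\mathbf{U}}}.$$ Then ${\mathbf{U}}'$ and ${\mathbf{V}}'$ are entrywise nonnegative, $F({\mathbf{U}}',{\mathbf{V}})\le F({\mathbf{U}},{\mathbf{V}})$ and $F({\mathbf{U}},{\mathbf{V}}')\le F({\mathbf{U}},{\mathbf{V}})$. In particular, $F$ is nonincreasing along the alternating iterations that apply these updates in turn.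
   Context: $\circ$ denotes entrywise (Hadamard) product and the fraction bar denotes entrywise division. $\|\cdot\|_F$ is the Frobenius norm. *)

From HB Require Import structures.
From mathcomp Require Import all_boot all_order all_algebra.
Set Implicit Arguments. Unset Strict Implicit. Unset Printing Implicit Defensive.
Import Order.TTheory GRing.Theory Num.Theory.
Local Open Scope ring_scope.

Definition hadamard (R : ringType) (m n : nat) (A B : 'M[R]_(m, n)) : 'M[R]_(m, n) :=
  \matrix_(i, j) (A i j * B i j).

Definition ediv (R : fieldType) (m n : nat) (A B : 'M[R]_(m, n)) : 'M[R]_(m, n) :=
  \matrix_(i, j) (A i j / B i j).

Definition mx_nonneg (R : numDomainType) (m n : nat) (A : 'M[R]_(m, n)) : Prop :=
  forall i j, 0 <= A i j.
Definition mx_pos (R : numDomainType) (m n : nat) (A : 'M[R]_(m, n)) : Prop :=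
  forall i j, 0 < A i j.

Definition frob (R : rcfType) (m n : nat) (A : 'M[R]_(m, n)) : R :=
  Num.sqrt (\sum_i \sum_j A i j ^+ 2).

Definition objF (R : rcfType) (m n r s t : nat) (k : 'I_s -> nat) (l : 'I_t -> nat)
  (XA : 'I_s -> 'M[R]_(m, n)) (XB : 'I_t -> 'M[R]_(m, n))
  (A : forall i : 'I_s, 'M[R]_(k i, m)) (B : forall j : 'I_t, 'M[R]_(n, l j))
  (U : 'M[R]_(m, r)) (V : 'M[R]_(n, r)) : R :=
  2^-1 * (\sum_(i < s) frob (A i *m (XA i - U *m V^T)) ^+ 2)
  + 2^-1 * (\sum_(j < t) frob ((XB j - U *m V^T) *m B j) ^+ 2).

Definition numU (R : ringType) (m n r s t : nat) (k : 'I_s -> nat) (l : 'I_t -> nat)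
  (XA : 'I_s -> 'M[R]_(m, n)) (XB : 'I_t -> 'M[R]_(m, n))
  (A : forall i : 'I_s, 'M[R]_(k i, m)) (B : forall j : 'I_t, 'M[R]_(n, l j))
  (U : 'M[R]_(m, r)) (V : 'M[R]_(n, r)) : 'M[R]_(m, r) :=
  \sum_(i < s) ((A i)^T *m A i *m XA i *m V)
  + \sum_(j < t) (XB j *m B j *m (B j)^T *m V).

Definition denU (R : ringType) (m n r s t : nat) (k : 'I_s -> nat) (l : 'I_t -> nat)
  (A : forall i : 'I_s, 'M[R]_(k i, m)) (B : forall j : 'I_t, 'M[R]_(n, l j))
  (U : 'M[R]_(m, r)) (V : 'M[R]_(n, r)) : 'M[R]_(m, r) :=
  \sum_(i < s) ((A i)^T *m A i *m U *m V^T *m V)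
  + \sum_(j < t) (U *m V^T *m B j *m (B j)^T *m V).

Definition numV (R : ringType) (m n r s t : nat) (k : 'I_s -> nat) (l : 'I_t -> nat)
  (XA : 'I_s -> 'M[R]_(m, n)) (XB : 'I_t -> 'M[R]_(m, n))
  (A : forall i : 'I_s, 'M[R]_(k i, m)) (B : forall j : 'I_t, 'M[R]_(n, l j))
  (U : 'M[R]_(m, r)) (V : 'M[R]_(n, r)) : 'M[R]_(n, r) :=
  \sum_(i < s) ((XA i)^T *m (A i)^T *m A i *m U)
  + \sum_(j < t) (B j *m (B j)^T *m (XB j)^T *m U).

Definition denV (R : ringType) (m n r s t : nat) (k : 'I_s -> nat) (l : 'I_t -> nat)
  (A : forall i : 'I_s, 'M[R]_(k i, m)) (B : forall j : 'I_t, 'M[R]_(n, l j))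
  (U : 'M[R]_(m, r)) (V : 'M[R]_(n, r)) : 'M[R]_(n, r) :=
  \sum_(i < s) (V *m U^T *m (A i)^T *m A i *m U)
  + \sum_(j < t) (B j *m (B j)^T *m V *m U^T *m U).

From HB Require Import structures.
From mathcomp Require Import all_boot all_order all_algebra.
From mathcomp Require Import ring lra.
Import Order.TTheory GRing.Theory Num.Theory.
Local Open Scope ring_scope.
Set Implicit Arguments. Unset Strict Implicit. Unset Printing Implicit Defensive.

(** The objective is quadratic in U, so with D the update denominator, N the
    numerator and h = (N - D) / D, the update is U' = U + U o h and
      F(U', V) = F(U, V) - <N - D, U o h> + 1/2 q(U o h),
    where q is the quadratic form of F in U. The first inner product equals
    S = sum D U h^2, and the Lee-Seung majorisation
      sum_pq K_pq (u_q h_q) (u_p h_p) <= sum_p (K u)_p u_p h_p^2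
    (for K symmetric and nonnegative, u nonnegative) bounds q(U o h) by S,
    hence F(U', V) <= F(U, V) - S/2 <= F(U, V). Transposing every matrix
    exchanges the roles of U and V, which gives the V update. *)

Section FrobeniusDot.
Variable R : comPzRingType.
Implicit Types m n p : nat.

Definition frob_dot m n (X Y : 'M[R]_(m, n)) : R := \tr (X^T *m Y).

Lemma frob_dotE m n (X Y : 'M[R]_(m, n)) :
  frob_dot X Y = \sum_i \sum_j X i j * Y i j.
Proof.
rewrite /frob_dot /mxtrace exchange_big /=; apply: eq_bigr => j _.
by rewrite !mxE; apply: eq_bigr => i _; rewrite !mxE.
Qed.

Lemma frob_dotC m n (X Y : 'M[R]_(m, n)) : frob_dot X Y = frob_dot Y X.
Proof. by rewrite /frob_dot -mxtrace_tr trmx_mul trmxK. Qed.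

Lemma frob_dotDl m n (X Y Z : 'M[R]_(m, n)) :
  frob_dot (X + Y) Z = frob_dot X Z + frob_dot Y Z.
Proof. by rewrite /frob_dot linearD /= mulmxDl mxtraceD. Qed.

Lemma frob_dotBl m n (X Y Z : 'M[R]_(m, n)) :
  frob_dot (X - Y) Z = frob_dot X Z - frob_dot Y Z.
Proof. by rewrite /frob_dot linearB /= mulmxBl linearB. Qed.

Lemma frob_dotBr m n (X Y Z : 'M[R]_(m, n)) :
  frob_dot Z (X - Y) = frob_dot Z X - frob_dot Z Y.
Proof. by rewrite frob_dotC frob_dotBl ![frob_dot _ Z]frob_dotC. Qed.

Lemma frob_dot_suml m n (I : finType) (F : I -> 'M[R]_(m, n)) Z :
  frob_dot (\sum_i F i) Z = \sum_i frob_dot (F i) Z.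
Proof. by rewrite /frob_dot linear_sum /= mulmx_suml linear_sum. Qed.

Lemma frob_dot_mull m n p (C : 'M[R]_(p, m)) (Y : 'M[R]_(m, n)) Z :
  frob_dot (C *m Y) Z = frob_dot Y (C^T *m Z).
Proof. by rewrite /frob_dot trmx_mul mulmxA. Qed.

Lemma frob_dot_mulr m n p (C : 'M[R]_(n, p)) (Y : 'M[R]_(m, n)) Z :
  frob_dot (Y *m C) Z = frob_dot Y (Z *m C^T).
Proof. by rewrite /frob_dot trmx_mul -mulmxA mxtrace_mulC mulmxA. Qed.

Lemma frob_dot_subsq m n (X Y : 'M[R]_(m, n)) :
  frob_dot (X - Y) (X - Y) = frob_dot X X - 2 * frob_dot X Y + frob_dot Y Y.
Proof. rewrite !frob_dotBl !frob_dotBr (frob_dotC Y X); ring. Qed.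

Lemma mulmx3E m p (P : 'M[R]_m) (G : 'M[R]_p) (M : 'M[R]_(m, p)) a b :
  (P *m M *m G) a b = \sum_(q : 'I_m * 'I_p) P a q.1 * G q.2 b * M q.1 q.2.
Proof.
rewrite mxE; under eq_bigr do rewrite mxE big_distrl.
rewrite exchange_big pair_bigA /=; apply: eq_bigr => q _; ring.
Qed.

End FrobeniusDot.

Section Nonneg.
Variable R : numDomainType.

Lemma mx_nonneg_mul m n p (X : 'M[R]_(m, n)) (Y : 'M[R]_(n, p)) :
  mx_nonneg X -> mx_nonneg Y -> mx_nonneg (X *m Y).
Proof. by move=> X0 Y0 i j; rewrite mxE; apply: sumr_ge0 => q _; rewrite mulr_ge0. Qed.

Lemma mx_nonneg_add m n (X Y : 'M[R]_(m, n)) :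
  mx_nonneg X -> mx_nonneg Y -> mx_nonneg (X + Y).
Proof. by move=> X0 Y0 i j; rewrite mxE addr_ge0. Qed.

Lemma mx_nonneg_tr m n (X : 'M[R]_(m, n)) : mx_nonneg X -> mx_nonneg X^T.
Proof. by move=> X0 i j; rewrite mxE. Qed.

Lemma mx_nonneg1 m : mx_nonneg (1%:M : 'M[R]_m).
Proof. by move=> i j; rewrite mxE ler0n. Qed.

End Nonneg.

Lemma mx_nonneg_hadamard_ediv (R : numFieldType) m n (U N D : 'M[R]_(m, n)) :
  mx_nonneg U -> mx_nonneg N -> mx_pos D -> mx_nonneg (hadamard U (ediv N D)).
Proof. by move=> U0 N0 D0 a b; rewrite !mxE mulr_ge0 // divr_ge0 // ltW. Qed.

Section Majorisation.
Variable R : realFieldType.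

Lemma quad_form_le_diag (I : finType) (K : I -> I -> R) (u h : I -> R) :
  (forall p q, K p q = K q p) -> (forall p q, 0 <= K p q) -> (forall p, 0 <= u p) ->
  \sum_p \sum_q K p q * (u q * h q) * (u p * h p)
  <= \sum_p (\sum_q K p q * u q) * u p * h p ^+ 2.
Proof.
move=> Ks K0 u0.
set T := \sum_p \sum_q K p q * u q * u p * h q ^+ 2.
have eT : T = \sum_p (\sum_q K p q * u q) * u p * h p ^+ 2.
  rewrite /T exchange_big /=; apply: eq_bigr => p _.
  rewrite !mulr_suml; apply: eq_bigr => q _; rewrite Ks; ring.
have eT' : \sum_p \sum_q K p q * u q * u p * h p ^+ 2 = T.
  by rewrite eT; apply: eq_bigr => p _; rewrite !mulr_suml.
rewrite -eT.
(* [T] is the mean of its two symmetric forms, and termwise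
   [2 a b <= a^2 + b^2] with weight [K p q u q u p >= 0]. *)
have -> : T = 2^-1 * \sum_p \sum_q
    (K p q * u q * u p * h q ^+ 2 + K p q * u q * u p * h p ^+ 2).
  under eq_bigr do rewrite big_split /=.
  rewrite big_split /= -/T eT'; lra.
rewrite mulr_sumr; apply: ler_sum => p _; rewrite mulr_sumr; apply: ler_sum => q _.
have : 0 <= K p q * u q * u p * (h q - h p) ^+ 2 by rewrite mulr_ge0 ?sqr_ge0 // !mulr_ge0.
lra.
Qed.

Lemma frob_dot_sandwich_hadamard_le m p (P : 'M[R]_m) (G : 'M[R]_p) (U h : 'M[R]_(m, p)) :
  P^T = P -> G^T = G -> mx_nonneg P -> mx_nonneg G -> mx_nonneg U ->
  frob_dot (P *m hadamard U h *m G) (hadamard U h)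
  <= \sum_a \sum_b (P *m U *m G) a b * U a b * h a b ^+ 2.
Proof.
move=> Ps Gs P0 G0 U0; rewrite frob_dotE !pair_bigA /=.
pose K (x y : 'I_m * 'I_p) := P x.1 y.1 * G y.2 x.2.
have Ks x y : K x y = K y x by rewrite /K -{1}Ps -{1}Gs !mxE mulrC.
have K0 x y : 0 <= K x y by rewrite mulr_ge0.
have := @quad_form_le_diag _ K (fun x => U x.1 x.2) (fun x => h x.1 x.2) Ks K0 (fun x => U0 _ _).
congr (_ <= _); apply: eq_bigr => x _; rewrite mulmx3E /=.
  by rewrite big_distrl; apply: eq_bigr => y _; rewrite /K !mxE.
by congr (_ * _ * _); apply: eq_bigr => y _.
Qed.

Lemma frob_dot_hadamard_le m p (P : 'M[R]_m) (G W : 'M[R]_p) (U h : 'M[R]_(m, p)) :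
  P^T = P -> G^T = G -> W^T = W ->
  mx_nonneg P -> mx_nonneg G -> mx_nonneg W -> mx_nonneg U ->
  frob_dot (P *m hadamard U h *m G) (hadamard U h)
    + frob_dot (hadamard U h *m W) (hadamard U h)
  <= \sum_a \sum_b (P *m U *m G + U *m W) a b * U a b * h a b ^+ 2.
Proof.
move=> Ps Gs Ws P0 G0 W0 U0.
have kP := frob_dot_sandwich_hadamard_le h Ps Gs P0 G0 U0.
have kW := frob_dot_sandwich_hadamard_le h (@trmx1 R m) Ws (@mx_nonneg1 R m) W0 U0.
rewrite !mul1mx in kW.
under eq_bigr do under eq_bigr do rewrite mxE !mulrDl.
under eq_bigr do rewrite big_split.
by rewrite big_split lerD.
Qed.

End Majorisation.

Section Frobenius.
Variable R : rcfType.

Lemma sqr_frob m n (M : 'M[R]_(m, n)) : frob M ^+ 2 = frob_dot M M.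
Proof.
rewrite /frob sqr_sqrtr ?frob_dotE; last first.
  by apply: sumr_ge0 => i _; apply: sumr_ge0 => j _; apply: sqr_ge0.
by apply: eq_bigr => i _; apply: eq_bigr => j _; rewrite expr2.
Qed.

Lemma frob_trmx m n (M : 'M[R]_(m, n)) : frob M^T = frob M.
Proof.
rewrite /frob exchange_big; congr Num.sqrt.
by apply: eq_bigr => i _; apply: eq_bigr => j _; rewrite mxE.
Qed.

Lemma sqr_frob_mulmx_residual_add m n r p (C : 'M[R]_(p, m)) (X : 'M[R]_(m, n))
    (U D : 'M[R]_(m, r)) (V : 'M[R]_(n, r)) :
  frob (C *m (X - (U + D) *m V^T)) ^+ 2 =
  frob (C *m (X - U *m V^T)) ^+ 2 - 2 * frob_dot (C^T *m C *m (X - U *m V^T) *m V) D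
  + frob_dot (C^T *m C *m D *m (V^T *m V)) D.
Proof.
have -> : C *m (X - (U + D) *m V^T) = C *m (X - U *m V^T) - C *m D *m V^T.
  by rewrite mulmxDl opprD addrA mulmxDr mulmxN mulmxA.
rewrite !sqr_frob frob_dot_subsq; congr (_ - 2 * _ + _).
  by rewrite frob_dotC frob_dot_mulr frob_dot_mull trmxK frob_dotC !mulmxA.
by rewrite frob_dot_mulr trmxK frob_dot_mull frob_dotC !mulmxA.
Qed.

Lemma sqr_frob_residual_mulmx_add m n r p (C : 'M[R]_(n, p)) (X : 'M[R]_(m, n))
    (U D : 'M[R]_(m, r)) (V : 'M[R]_(n, r)) :
  frob ((X - (U + D) *m V^T) *m C) ^+ 2 =
  frob ((X - U *m V^T) *m C) ^+ 2 - 2 * frob_dot ((X - U *m V^T) *m C *m C^T *m V) D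
  + frob_dot (D *m (V^T *m (C *m C^T) *m V)) D.
Proof.
have -> : (X - (U + D) *m V^T) *m C = (X - U *m V^T) *m C - D *m V^T *m C.
  by rewrite (mulmxDl U D) opprD addrA mulmxBl.
rewrite !sqr_frob frob_dot_subsq; congr (_ - 2 * _ + _).
  by rewrite frob_dotC 2!frob_dot_mulr trmxK frob_dotC.
by rewrite 2!frob_dot_mulr trmxK frob_dotC !mulmxA.
Qed.

End Frobenius.

Section UpdateU.
Variables (R : rcfType) (m n r s t : nat) (k : 'I_s -> nat) (l : 'I_t -> nat).
Variables (XA : 'I_s -> 'M[R]_(m, n)) (XB : 'I_t -> 'M[R]_(m, n)).
Variables (A : forall i : 'I_s, 'M[R]_(k i, m)) (B : forall j : 'I_t, 'M[R]_(n, l j)).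

Local Notation F := (objF XA XB A B).
Local Notation SA := (\sum_(i < s) ((A i)^T *m A i)).
Local Notation SB := (\sum_(j < t) (B j *m (B j)^T)).

Lemma objF_addU (U D : 'M[R]_(m, r)) (V : 'M[R]_(n, r)) :
  F (U + D) V = F U V - frob_dot (numU XA XB A B U V - denU A B U V) D
    + 2^-1 * (frob_dot (SA *m D *m (V^T *m V)) D + frob_dot (D *m (V^T *m SB *m V)) D).
Proof.
rewrite /objF.
under eq_bigr do rewrite sqr_frob_mulmx_residual_add.
under [X in _ + 2^-1 * X]eq_bigr do rewrite sqr_frob_residual_mulmx_add.
rewrite !big_split /= !sumrN -!mulr_sumr.
have -> : numU XA XB A B U V - denU A B U V =
    \sum_(i < s) ((A i)^T *m A i *m (XA i - U *m V^T) *m V)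
    + \sum_(j < t) ((XB j - U *m V^T) *m B j *m (B j)^T *m V).
  rewrite /numU /denU opprD addrACA -!sumrB.
  congr (_ + _); apply: eq_bigr => i _; last by rewrite !mulmxBl.
  by rewrite mulmxBr mulmxBl !mulmxA.
rewrite frob_dotDl !frob_dot_suml !mulmx_suml mulmx_sumr mulmx_suml mulmx_sumr.
by rewrite !frob_dot_suml; field.
Qed.

Lemma denU_factor (U : 'M[R]_(m, r)) (V : 'M[R]_(n, r)) :
  denU A B U V = SA *m U *m (V^T *m V) + U *m (V^T *m SB *m V).
Proof.
rewrite /denU !mulmx_suml mulmx_sumr mulmx_suml mulmx_sumr.
by congr (_ + _); apply: eq_bigr => i _; rewrite !mulmxA.
Qed.

Lemma numU_factor (U : 'M[R]_(m, r)) (V : 'M[R]_(n, r)) :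
  numU XA XB A B U V = (\sum_(i < s) ((A i)^T *m A i *m XA i)) *m V
    + (\sum_(j < t) (XB j *m B j *m (B j)^T)) *m V.
Proof. by rewrite !mulmx_suml. Qed.

Lemma objF_updateU_le (U : 'M[R]_(m, r)) (V : 'M[R]_(n, r)) :
  mx_nonneg U -> mx_nonneg V -> mx_nonneg SA -> mx_nonneg SB ->
  mx_pos (denU A B U V) ->
  F (hadamard U (ediv (numU XA XB A B U V) (denU A B U V))) V <= F U V.
Proof.
move=> U0 V0 SA0 SB0 Dpos.
set N := numU XA XB A B U V; set D := denU A B U V.
have Dnz a b : D a b != 0 by rewrite gt_eqF.
pose h := \matrix_(a, b) ((N a b - D a b) / D a b).
have -> : hadamard U (ediv N D) = U + hadamard U h.
  by apply/matrixP => a b; have := Dnz a b; rewrite !mxE => ?; field.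
rewrite objF_addU -/N -/D.
set S := \sum_a \sum_b D a b * U a b * h a b ^+ 2.
have -> : frob_dot (N - D) (hadamard U h) = S.
  rewrite frob_dotE; apply: eq_bigr => a _; apply: eq_bigr => b _.
  by have := Dnz a b; rewrite !mxE => ?; field.
have S0 : 0 <= S.
  apply: sumr_ge0 => a _; apply: sumr_ge0 => b _.
  by rewrite mulr_ge0 ?sqr_ge0 // mulr_ge0 // ltW.
have SAs : SA^T = SA.
  by rewrite linear_sum; apply: eq_bigr => i _; rewrite /= trmx_mul trmxK.
have SBs : SB^T = SB.
  by rewrite linear_sum; apply: eq_bigr => j _; rewrite /= trmx_mul trmxK.
have Gs : (V^T *m V)^T = V^T *m V by rewrite trmx_mul trmxK.
have Ws : (V^T *m SB *m V)^T = V^T *m SB *m V by rewrite !trmx_mul trmxK SBs mulmxA.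
have G0 : mx_nonneg (V^T *m V) by apply: mx_nonneg_mul => //; apply: mx_nonneg_tr.
have W0 : mx_nonneg (V^T *m SB *m V).
  by do 2 apply: mx_nonneg_mul => //; apply: mx_nonneg_tr.
have := frob_dot_hadamard_le h SAs Gs Ws SA0 G0 W0 U0.
rewrite -denU_factor -/D -/S; lra.
Qed.

Lemma mx_nonneg_numU (U : 'M[R]_(m, r)) (V : 'M[R]_(n, r)) :
  mx_nonneg V -> mx_nonneg (\sum_(i < s) ((A i)^T *m A i *m XA i)) ->
  mx_nonneg (\sum_(j < t) (XB j *m B j *m (B j)^T)) ->
  mx_nonneg (numU XA XB A B U V).
Proof.
by move=> V0 SX0 XS0; rewrite numU_factor; apply: mx_nonneg_add; apply: mx_nonneg_mul.
Qed.

End UpdateU.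

Section UpdateV.
Variables (R : rcfType) (m n r s t : nat) (k : 'I_s -> nat) (l : 'I_t -> nat).
Variables (XA : 'I_s -> 'M[R]_(m, n)) (XB : 'I_t -> 'M[R]_(m, n)).
Variables (A : forall i : 'I_s, 'M[R]_(k i, m)) (B : forall j : 'I_t, 'M[R]_(n, l j)).

Local Notation F := (objF XA XB A B).
Local Notation XAt := (fun j => (XB j)^T).
Local Notation XBt := (fun i => (XA i)^T).
Local Notation At := (fun j => (B j)^T).
Local Notation Bt := (fun i => (A i)^T).

Lemma objF_trmx (U : 'M[R]_(m, r)) (V : 'M[R]_(n, r)) :
  F U V = objF XAt XBt At Bt V U.
Proof.
rewrite /objF addrC; congr (_ * _ + _ * _); apply: eq_bigr => i _;
  by rewrite -frob_trmx trmx_mul linearB /= trmx_mul trmxK.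
Qed.

Lemma numV_trmx (U : 'M[R]_(m, r)) (V : 'M[R]_(n, r)) :
  numV XA XB A B U V = numU XAt XBt At Bt V U.
Proof. by rewrite /numV /numU addrC; congr (_ + _); apply: eq_bigr => i _; rewrite !trmxK. Qed.

Lemma denV_trmx (U : 'M[R]_(m, r)) (V : 'M[R]_(n, r)) :
  denV A B U V = denU At Bt V U.
Proof. by rewrite /denV /denU addrC; congr (_ + _); apply: eq_bigr => i _; rewrite !trmxK. Qed.

Lemma objF_updateV_le (U : 'M[R]_(m, r)) (V : 'M[R]_(n, r)) :
  mx_nonneg U -> mx_nonneg V ->
  mx_nonneg (\sum_(i < s) ((A i)^T *m A i)) ->
  mx_nonneg (\sum_(j < t) (B j *m (B j)^T)) ->
  mx_pos (denV A B U V) ->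
  F U (hadamard V (ediv (numV XA XB A B U V) (denV A B U V))) <= F U V.
Proof.
move=> U0 V0 SA0 SB0 Dpos.
rewrite numV_trmx denV_trmx !objF_trmx; apply: objF_updateU_le => //.
- by under eq_bigr do rewrite trmxK.
- by under eq_bigr do rewrite trmxK.
- by rewrite -denV_trmx.
Qed.

Lemma mx_nonneg_numV (U : 'M[R]_(m, r)) (V : 'M[R]_(n, r)) :
  mx_nonneg U -> mx_nonneg (\sum_(i < s) ((A i)^T *m A i *m XA i)) ->
  mx_nonneg (\sum_(j < t) (XB j *m B j *m (B j)^T)) ->
  mx_nonneg (numV XA XB A B U V).
Proof.
move=> U0 SX0 XS0; rewrite numV_trmx; apply: mx_nonneg_numU => //.
- rewrite (eq_bigr (fun j => (XB j *m B j *m (B j)^T)^T)) -?linear_sum.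
    exact: mx_nonneg_tr.
  by move=> j _; rewrite !trmx_mul trmxK mulmxA.
- rewrite (eq_bigr (fun i => ((A i)^T *m A i *m XA i)^T)) -?linear_sum.
    exact: mx_nonneg_tr.
  by move=> i _; rewrite !trmx_mul trmxK mulmxA.
Qed.

End UpdateV.

Theorem mainTheorem7 (R : rcfType) (m n r s t : nat)
  (k : 'I_s -> nat) (l : 'I_t -> nat)
  (XA : 'I_s -> 'M[R]_(m, n)) (XB : 'I_t -> 'M[R]_(m, n))
  (A : forall i : 'I_s, 'M[R]_(k i, m)) (B : forall j : 'I_t, 'M[R]_(n, l j))
  (U : 'M[R]_(m, r)) (V : 'M[R]_(n, r)) :
  mx_nonneg U -> mx_nonneg V ->
  mx_nonneg (\sum_(i < s) ((A i)^T *m A i)) ->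
  mx_nonneg (\sum_(j < t) (B j *m (B j)^T)) ->
  mx_nonneg (\sum_(i < s) ((A i)^T *m A i *m XA i)) ->
  mx_nonneg (\sum_(j < t) (XB j *m B j *m (B j)^T)) ->
  mx_pos (denU A B U V) -> mx_pos (denV A B U V) ->
  let U' := hadamard U (ediv (numU XA XB A B U V) (denU A B U V)) in
  let V' := hadamard V (ediv (numV XA XB A B U V) (denV A B U V)) in
  [/\ mx_nonneg U', mx_nonneg V',
      objF XA XB A B U' V <= objF XA XB A B U V
    & objF XA XB A B U V' <= objF XA XB A B U V].
Proof.
move=> U0 V0 SA0 SB0 SX0 XS0 DU DV U' V'; split.
- by apply: mx_nonneg_hadamard_ediv => //; apply: mx_nonneg_numU.
- by apply: mx_nonneg_hadamard_ediv => //; apply: mx_nonneg_numV.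
- exact: objF_updateU_le.
- exact: objF_updateV_le.
Qed.
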